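(* Let $(X,d)$ be a totally bounded metric space, $\emptyset\ne F\subseteq X$ with a representation $(\tilde F_k)$, and let $G,H:\mathbb{R}_+\to\mathbb{R}_+$ satisfy properties (G) and (H). Let $(x_n)$ be a sequence in $X$ that is uniformly $(G,H)$-Fej\'er monotone w.r.t. $F$ and has approximate $F$-points. Then $(x_n)$ is Cauchy.
   Context: A representation of $F$: sets $\tilde F_k\subseteq X$ with $F=\bigcap_k\tilde F_k$; $AF_k:=\bigcap_{l\le k}\tilde F_l$. Property (G): $a_n\to0$ implies $G(a_n)\to0$ for all sequences $(a_n)$ in $\mathbb{R}_+$; property (H): $H(a_n)\to0$ implies $a_n\to0$. $(x_n)$ is uniformly $(G,H)$-Fej\'er monotone w.r.t. $F$ if for all $r,n,m\in\mathbb{N}$ there exists $k\in\mathbb{N}$ such that for all $p\in AF_k$ and all $l\le m$, $H(d(x_{n+l},p))<G(d(x_n,p))+\frac1{r+1}$. $(x_n)$ has approximate $F$-points if for every $k\in\mathbb{N}$ there is $N$ with $x_N\in AF_k$. *)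

From Stdlib Require Import Reals List.
Open Scope R_scope.

Definition is_metric {X : Type} (d : X -> X -> R) : Prop :=
  (forall x y, 0 <= d x y) /\
  (forall x y, d x y = 0 <-> x = y) /\
  (forall x y, d x y = d y x) /\
  (forall x y z, d x z <= d x y + d y z).

Definition totally_bounded {X : Type} (d : X -> X -> R) : Prop :=
  forall eps, 0 < eps ->
    exists l : list X, forall x, exists y, In y l /\ d x y < eps.

Definition representation {X : Type} (F : X -> Prop) (Ft : nat -> X -> Prop) : Prop :=
  forall x, F x <-> (forall k, Ft k x).

Definition AF {X : Type} (Ft : nat -> X -> Prop) (k : nat) (p : X) : Prop :=
  forall l, (l <= k)%nat -> Ft l p.

(* G, H : R_+ -> R_+ (represented as R -> R mapping [0,oo) into [0,oo)) *)
Definition maps_nonneg (G : R -> R) : Prop := forall a, 0 <= a -> 0 <= G a.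

Definition property_G (G : R -> R) : Prop :=
  forall a : nat -> R, (forall n, 0 <= a n) -> Un_cv a 0 -> Un_cv (fun n => G (a n)) 0.

Definition property_H (H : R -> R) : Prop :=
  forall a : nat -> R, (forall n, 0 <= a n) -> Un_cv (fun n => H (a n)) 0 -> Un_cv a 0.

Definition unif_GH_fejer {X : Type} (d : X -> X -> R) (G H : R -> R)
    (Ft : nat -> X -> Prop) (x : nat -> X) : Prop :=
  forall r n m : nat, exists k : nat, forall p, AF Ft k p ->
    forall l, (l <= m)%nat ->
      H (d (x (n + l)%nat) p) < G (d (x n) p) + / (INR r + 1).

Definition approx_F_points {X : Type} (Ft : nat -> X -> Prop) (x : nat -> X) : Prop :=
  forall k, exists N, AF Ft k (x N).

Definition cauchy {X : Type} (d : X -> X -> R) (x : nat -> X) : Prop :=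
  forall eps, 0 < eps -> exists N, forall m n, (N <= m)%nat -> (N <= n)%nat ->
    d (x m) (x n) < eps.

(* Fix eps. By (H) and (G) there are delta, alpha > 0 such that H(a) < delta
   forces a < eps/2 and a < alpha forces G(a) < delta/2. Cover X by finitely
   many alpha/2-balls. Since the sets AF_k decrease and every AF_k contains some
   x_N, one of the balls, centred at y, contains points x_N of every AF_k. Take
   such an x_n0. For i >= n0, uniform Fejer monotonicity gives a level k, and a
   point p = x_N of AF_k near y is alpha-close to x_n0; hence H(d(x_i,p)) and
   H(d(x_n0,p)) are below delta, so d(x_i, x_n0) < eps. *)
From Stdlib Require Import Reals List Lra Lia Classical ClassicalEpsilon.
Open Scope R_scope.

Lemma inv_INR_S_eventually_lt (e : R) :
  0 < e -> exists N, forall n, (N <= n)%nat -> / (INR n + 1) < e.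
Proof.
  intros He. destruct (archimed_cor1 e He) as [N [HN HN0]].
  exists N. intros n Hn.
  apply Rlt_trans with (/ INR N); [|exact HN].
  apply Rinv_lt_contravar.
  - apply Rmult_lt_0_compat; [apply lt_0_INR; exact HN0|].
    pose proof (pos_INR n); lra.
  - apply le_INR in Hn; lra.
Qed.

Lemma Un_cv_0_of_Rabs_lt_inv_S (a : nat -> R) :
  (forall n, Rabs (a n) < / (INR n + 1)) -> Un_cv a 0.
Proof.
  intros Ha e He. destruct (inv_INR_S_eventually_lt e He) as [N HN].
  exists N. intros n Hn. unfold R_dist. rewrite Rminus_0_r.
  apply Rlt_trans with (/ (INR n + 1)); [apply Ha | apply HN; exact Hn].
Qed.

(* Otherwise choose a counterexample a_n for each delta = 1/(n+1). *)
Lemma sequential_to_eps_delta (u v : R -> R) :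
  (forall a : nat -> R, (forall n, 0 <= a n) ->
     Un_cv (fun n => u (a n)) 0 -> Un_cv (fun n => v (a n)) 0) ->
  forall e, 0 < e -> exists delta, 0 < delta /\
    forall a, 0 <= a -> Rabs (u a) < delta -> Rabs (v a) < e.
Proof.
  intros Huv e He. apply NNPP; intros Hno.
  assert (Hbad : forall n : nat, exists a,
             0 <= a /\ Rabs (u a) < / (INR n + 1) /\ e <= Rabs (v a)).
  { intros n. apply NNPP; intros Hn. apply Hno. exists (/ (INR n + 1)). split.
    - apply Rinv_0_lt_compat. pose proof (pos_INR n); lra.
    - intros a Ha Hua. apply Rnot_le_lt. intros Hva. apply Hn. exists a; auto. }
  apply choice in Hbad as [a Ha].
  assert (Hcv : Un_cv (fun n => v (a n)) 0).
  { apply Huv; [intros n; apply Ha|].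
    apply Un_cv_0_of_Rabs_lt_inv_S. intros n; apply Ha. }
  destruct (Hcv e He) as [N HN]. specialize (HN N (le_n N)).
  unfold R_dist in HN. rewrite Rminus_0_r in HN.
  destruct (Ha N) as [_ [_ HeN]]. lra.
Qed.

Lemma property_G_eps_delta (G : R -> R) :
  property_G G ->
  forall e, 0 < e -> exists delta, 0 < delta /\
    forall a, 0 <= a -> a < delta -> G a < e.
Proof.
  intros HG e He.
  destruct (sequential_to_eps_delta (fun a => a) G HG e He) as [delta [Hdelta Hsmall]].
  exists delta. split; [exact Hdelta|]. intros a Ha Hadelta.
  apply Rle_lt_trans with (Rabs (G a)); [apply Rle_abs|].
  apply Hsmall; [exact Ha|]. rewrite Rabs_pos_eq; assumption.
Qed.

Lemma property_H_eps_delta (H : R -> R) :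
  maps_nonneg H -> property_H H ->
  forall e, 0 < e -> exists delta, 0 < delta /\
    forall a, 0 <= a -> H a < delta -> a < e.
Proof.
  intros Hnn HH e He.
  destruct (sequential_to_eps_delta H (fun a => a) HH e He) as [delta [Hdelta Hsmall]].
  exists delta. split; [exact Hdelta|]. intros a Ha HHa.
  rewrite <- (Rabs_pos_eq a Ha). apply Hsmall; [exact Ha|].
  rewrite Rabs_pos_eq; [exact HHa | apply Hnn; exact Ha].
Qed.

Lemma In_antitone_exists_forall {A : Type} (Q : A -> nat -> Prop) (L : list A) :
  (forall y K K', (K <= K')%nat -> Q y K' -> Q y K) ->
  (forall K, exists y, In y L /\ Q y K) ->
  exists y, In y L /\ forall K, Q y K.
Proof.
  intros Hanti. induction L as [|a L IH]; intros Hex.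
  - destruct (Hex 0%nat) as [y [[] _]].
  - destruct (classic (forall K, Q a K)) as [Ha | Ha].
    + exists a. split; [left; reflexivity | exact Ha].
    + apply not_all_ex_not in Ha as [K0 HK0].
      destruct IH as [y [Hy HQy]].
      * intros K. destruct (Hex (Nat.max K K0)) as [y [[<- | Hy] HQy]].
        -- exfalso. apply HK0. apply (Hanti a K0 (Nat.max K K0)); [lia | exact HQy].
        -- exists y. split; [exact Hy|]. apply (Hanti y K (Nat.max K K0)); [lia | exact HQy].
      * exists y. split; [right; exact Hy | exact HQy].
Qed.

Lemma AF_antitone {X : Type} (Ft : nat -> X -> Prop) (k k' : nat) (p : X) :
  (k <= k')%nat -> AF Ft k' p -> AF Ft k p.
Proof. intros Hkk' Hp l Hl. apply Hp. lia. Qed.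

Section UniformFejer.

Variables (X : Type) (d : X -> X -> R) (Ft : nat -> X -> Prop) (G H : R -> R)
  (x : nat -> X).
Hypothesis d_metric : is_metric d.

Lemma dist_le_via (a b z : X) : d a b <= d a z + d b z.
Proof.
  destruct d_metric as [_ [_ [Hsym Htri]]].
  rewrite (Hsym b z). apply Htri.
Qed.

Lemma cauchy_of_anchors :
  (forall eps, 0 < eps -> exists n0, forall i, (n0 <= i)%nat -> d (x i) (x n0) < eps) ->
  cauchy d x.
Proof.
  intros Hanchor eps Heps.
  destruct (Hanchor (eps / 2)) as [n0 Hn0]; [lra|].
  exists n0. intros m n Hm Hn.
  pose proof (dist_le_via (x m) (x n) (x n0)).
  pose proof (Hn0 m Hm). pose proof (Hn0 n Hn). lra.
Qed.

Hypothesis x_fejer : unif_GH_fejer d G H Ft x.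

Lemma unif_fejer_common_point (r n i : nat) (delta : R) :
  (n <= i)%nat ->
  (forall k, exists p, AF Ft k p /\ G (d (x n) p) + / (INR r + 1) <= delta) ->
  exists p, H (d (x i) p) < delta /\ H (d (x n) p) < delta.
Proof.
  intros Hni Hpts.
  destruct (x_fejer r n (i - n)%nat) as [k Hk].
  destruct (Hpts k) as [p [Hp Hpdelta]].
  exists p. split.
  - replace i with (n + (i - n))%nat at 1 by lia.
    specialize (Hk p Hp (i - n)%nat (le_n _)). lra.
  - rewrite <- (Nat.add_0_r n) at 1.
    specialize (Hk p Hp 0%nat (Nat.le_0_l _)). lra.
Qed.

Hypotheses (X_totally_bounded : totally_bounded d)
  (H_nonneg : maps_nonneg H)
  (G_prop : property_G G) (H_prop : property_H H)
  (x_approx : approx_F_points Ft x).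

Lemma unif_fejer_anchor (eps : R) :
  0 < eps -> exists n0, forall i, (n0 <= i)%nat -> d (x i) (x n0) < eps.
Proof.
  intros Heps.
  assert (Hd0 : forall a b, 0 <= d a b) by apply d_metric.
  destruct (property_H_eps_delta H H_nonneg H_prop (eps / 2)) as [delta [Hdelta HHsmall]];
    [lra|].
  destruct (property_G_eps_delta G G_prop (delta / 2)) as [alpha [Halpha HGsmall]];
    [lra|].
  destruct (inv_INR_S_eventually_lt (delta / 2)) as [r Hr]; [lra|].
  specialize (Hr r (le_n r)).
  destruct (X_totally_bounded (alpha / 2)) as [L HL]; [lra|].
  set (near := fun y k => exists N, AF Ft k (x N) /\ d (x N) y < alpha / 2).
  destruct (In_antitone_exists_forall near L) as [y [_ Hy]].
  - intros y K K' HKK' [N [HN HNy]]. exists N. split; [|exact HNy].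
    exact (AF_antitone Ft K K' (x N) HKK' HN).
  - intros K. destruct (x_approx K) as [N HN].
    destruct (HL (x N)) as [y [Hy HNy]]. exists y. split; [exact Hy|]. exists N; auto.
  - destruct (Hy 0%nat) as [n0 [_ Hn0y]].
    exists n0. intros i Hi.
    destruct (unif_fejer_common_point r n0 i delta Hi) as [p [Hip Hn0p]].
    + intros k. destruct (Hy k) as [N [HN HNy]].
      exists (x N). split; [exact HN|].
      assert (HGN : G (d (x n0) (x N)) < delta / 2).
      { apply HGsmall; [apply Hd0|].
        pose proof (dist_le_via (x n0) (x N) y). lra. }
      lra.
    + pose proof (HHsmall _ (Hd0 _ _) Hip). pose proof (HHsmall _ (Hd0 _ _) Hn0p).
      pose proof (dist_le_via (x i) (x n0) p). lra.
Qed.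

End UniformFejer.

Theorem corollary5p2 (X : Type) (d : X -> X -> R)
  (F : X -> Prop) (Ft : nat -> X -> Prop) (G H : R -> R) (x : nat -> X) :
  is_metric d -> totally_bounded d ->
  (exists p, F p) -> representation F Ft ->
  maps_nonneg G -> maps_nonneg H -> property_G G -> property_H H ->
  unif_GH_fejer d G H Ft x -> approx_F_points Ft x ->
  cauchy d x.
Proof.
  intros Hmetric Htb _ _ _ HHnn HG HH Hfejer Happrox.
  apply cauchy_of_anchors; [exact Hmetric|].
  intros eps Heps.
  exact (unif_fejer_anchor X d Ft G H x Hmetric Hfejer Htb HHnn HG HH Happrox eps Heps).
Qed.
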